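(* Assume the Bellman setting below and hypotheses (H1), (H3), (H4). Then the Bellman problem $\sup_{P\in\mathcal P}\{-A(P)U+y(P)\}=0$ has at most one solution $U\in\mathbb R^{M+1}$.
   Context: Bellman setting: Let $M\ge 0$ be an integer and $\mathcal P=\mathcal P_0\times\cdots\times\mathcal P_M$ a product of nonempty sets; write $P=(P_0,\dots,P_M)\in\mathcal P$. Let $A:\mathcal P\to\mathbb R^{(M+1)\times(M+1)}$ and $y:\mathcal P\to\mathbb R^{M+1}$ be row-decoupled: for each $i$, the $i$-th row of $A(P)$ and the $i$-th entry of $y(P)$ depend only on $P_i$. Inequalities between vectors are entrywise and suprema of families of vectors are entrywise. The Bellman problem is to find $U$ with $\sup_{P\in\mathcal P}\{-A(P)U+y(P)\}=0$. Row $i$ of a matrix $(a_{ij})$ is strictly diagonally dominant (s.d.d.) if $|a_{ii}|>\sum_{j\ne i}|a_{ij}|$, weakly diagonally dominant (w.d.d.) if $|a_{ii}|\ge\sum_{j\ne i}|a_{ij}|$; a matrix is w.d.d. if all rows are. A Z-matrix is a real matrix with nonpositive off-diagonal entries. (H1): $P\mapsto A(P)^{-1}$ is bounded on $\{P: A(P)\text{ nonsingular}\}$. (H3): for each $P$, $A(P)$ is a w.d.d. Z-matrix with nonnegative diagonal entries, and $[A(P)]_{ii}\le1$ whenever row $i$ of $A(P)$ is not s.d.d. Define $[\hat y(P)]_i=[y(P)]_i$ if row $i$ of $A(P)$ is not s.d.d. and $[\hat y(P)]_i=-\infty$ otherwise, and the operator $\mathbb M$ on vectors with entries in $[-\infty,\infty)$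 by $[\mathbb M X]_i=\sup_{P\in\mathcal P}\{(1-[A(P)]_{ii})X_i-\sum_{j\ne i}[A(P)]_{ij}X_j+[\hat y(P)]_i\}$ (i.e. $\mathbb M=I+\mathbb A$ with $\mathbb AU=\sup_P\{-A(P)U+\hat y(P)\}$), with the conventions $0\cdot(-\infty)=0$ and that any sum containing $-\infty$ equals $-\infty$; $\mathbb M^0=I$, $\mathbb M^k=\mathbb M\circ\mathbb M^{k-1}$. (H4): for each $U\in\mathbb R^{M+1}$ and each $i\in\{0,\dots,M\}$ there exist integers $0\le m_1<m_2$ with $[\mathbb M^{m_1}U]_i>[\mathbb M^{m_2}U]_i$. *)

From Stdlib Require Import Reals ClassicalEpsilon.
From mathcomp Require Import all_boot.

Set Implicit Arguments.
Unset Strict Implicit.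
Local Open Scope R_scope.

Definition rmat (n : nat) := 'I_n -> 'I_n -> R.
Definition rvec (n : nat) := 'I_n -> R.

Definition rsum (n : nat) (F : 'I_n -> R) : R := \big[Rplus/R0]_(j : 'I_n) F j.
Definition rsum_off (n : nat) (i : 'I_n) (F : 'I_n -> R) : R :=
  \big[Rplus/R0]_(j : 'I_n | j != i) F j.

Definition mxmul (n : nat) (A B : rmat n) : rmat n :=
  fun i k => rsum (fun j => (A i j * B j k)).
Definition mxid (n : nat) : rmat n := fun i j => if i == j then 1 else 0.

Definition is_inverse (n : nat) (A B : rmat n) : Prop :=
  mxmul A B = @mxid n /\ mxmul B A = @mxid n.

Definition row_sdd (n : nat) (A : rmat n) (i : 'I_n) : Prop :=
  (rsum_off i (fun j => Rabs (A i j)) < Rabs (A i i)).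
Definition row_wdd (n : nat) (A : rmat n) (i : 'I_n) : Prop :=
  (rsum_off i (fun j => Rabs (A i j)) <= Rabs (A i i)).
Definition wdd (n : nat) (A : rmat n) : Prop := forall i, row_wdd A i.
Definition Zmatrix (n : nat) (A : rmat n) : Prop :=
  forall i j, i <> j -> (A i j <= 0).

Definition policy (M : nat) (Pset : 'I_M.+1 -> Type) := forall i, Pset i.

Definition row_decoupled (M : nat) (Pset : 'I_M.+1 -> Type)
  (A : policy Pset -> rmat M.+1) (y : policy Pset -> rvec M.+1) : Prop :=
  forall (P Q : policy Pset) (i : 'I_M.+1), P i = Q i ->
    (forall j, A P i j = A Q i j) /\ y P i = y Q i.

Definition bellman_term (M : nat) (Pset : 'I_M.+1 -> Type)
  (A : policy Pset -> rmat M.+1) (y : policy Pset -> rvec M.+1)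
  (U : rvec M.+1) (P : policy Pset) (i : 'I_M.+1) : R :=
  (- rsum (fun j => A P i j * U j) + y P i).

Definition bellman_solution (M : nat) (Pset : 'I_M.+1 -> Type)
  (A : policy Pset -> rmat M.+1) (y : policy Pset -> rvec M.+1)
  (U : rvec M.+1) : Prop :=
  forall i, is_lub (fun r => exists P : policy Pset, r = bellman_term A y U P i) 0.

Definition H1 (M : nat) (Pset : 'I_M.+1 -> Type) (A : policy Pset -> rmat M.+1) : Prop :=
  exists C : R, forall (P : policy Pset) (B : rmat M.+1),
    is_inverse (A P) B -> forall i j, (Rabs (B i j) <= C).

Definition H3 (M : nat) (Pset : 'I_M.+1 -> Type) (A : policy Pset -> rmat M.+1) : Prop :=
  forall P : policy Pset,
    wdd (A P) /\ Zmatrix (A P) /\ (forall i, (0 <= A P i i)) /\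
    (forall i, ~ row_sdd (A P) i -> (A P i i <= 1)).

Inductive ER : Type := Fin (r : R) | NInf | PInf.

Definition ele (x y : ER) : Prop :=
  match x, y with
  | NInf, _ => True
  | _, PInf => True
  | Fin a, Fin b => (a <= b)
  | _, _ => False
  end.
Definition elt (x y : ER) : Prop := ele x y /\ x <> y.

(* Addition: any sum containing -oo is -oo; otherwise +oo absorbs. *)
Definition eadd (x y : ER) : ER :=
  match x, y with
  | NInf, _ | _, NInf => NInf
  | PInf, _ | _, PInf => PInf
  | Fin a, Fin b => Fin (a + b)
  end.

(* Real scalar times extended real, with 0 * (+-oo) = 0. *)
Definition escal (c : R) (x : ER) : ER :=
  match x with
  | Fin a => Fin (c * a)
  | NInf => if Rlt_dec 0 c then NInf else if Rlt_dec c 0 then PInf else Fin 0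
  | PInf => if Rlt_dec 0 c then PInf else if Rlt_dec c 0 then NInf else Fin 0
  end.

Definition is_esup (S : ER -> Prop) (s : ER) : Prop :=
  (forall x, S x -> ele x s) /\ (forall b, (forall x, S x -> ele x b) -> ele s b).

Definition esup (S : ER -> Prop) : ER :=
  epsilon (inhabits NInf) (fun s => is_esup S s).

Definition yhat (M : nat) (Pset : 'I_M.+1 -> Type)
  (A : policy Pset -> rmat M.+1) (y : policy Pset -> rvec M.+1)
  (P : policy Pset) (i : 'I_M.+1) : ER :=
  if Rlt_dec (rsum_off i (fun j => Rabs (A P i j))) (Rabs (A P i i))
  then NInf else Fin (y P i).

Definition Mterm (M : nat) (Pset : 'I_M.+1 -> Type)
  (A : policy Pset -> rmat M.+1) (y : policy Pset -> rvec M.+1)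
  (X : 'I_M.+1 -> ER) (P : policy Pset) (i : 'I_M.+1) : ER :=
  eadd (eadd (escal (1 - A P i i) (X i))
             (\big[eadd/Fin R0]_(j : 'I_M.+1 | j != i) escal (- A P i j) (X j)))
       (yhat A y P i).

Definition Mop (M : nat) (Pset : 'I_M.+1 -> Type)
  (A : policy Pset -> rmat M.+1) (y : policy Pset -> rvec M.+1)
  (X : 'I_M.+1 -> ER) : 'I_M.+1 -> ER :=
  fun i => esup (fun v => exists P : policy Pset, v = Mterm A y X P i).

Definition Mpow (M : nat) (Pset : 'I_M.+1 -> Type)
  (A : policy Pset -> rmat M.+1) (y : policy Pset -> rvec M.+1)
  (k : nat) (X : 'I_M.+1 -> ER) : 'I_M.+1 -> ER :=
  iter k (Mop A y) X.

Definition H4 (M : nat) (Pset : 'I_M.+1 -> Type)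
  (A : policy Pset -> rmat M.+1) (y : policy Pset -> rvec M.+1) : Prop :=
  forall (U : rvec M.+1) (i : 'I_M.+1), exists m1 m2 : nat,
    (m1 < m2)%N /\ elt (Mpow A y m2 (fun j => Fin (U j)) i)
                       (Mpow A y m1 (fun j => Fin (U j)) i).

(* Let U and V solve the Bellman problem and let e > 0.  Choosing row by row
   (row-decoupling) a policy P whose residual -A(P)U + y(P) is at least -e,
   one gets A(P)(U - V) <= e.  Suppose A(P) had a nonempty set K of non-s.d.d.
   rows without off-diagonal entries leaving K.  On such rows the iterates of
   the operator M started at U stay between U - m e and U, so if this happened
   for arbitrarily small e the iterates would be constant on K, against (H4);
   since there are finitely many sets K, it fails for all e below some e0.
   For e <= e0 a maximum principle then shows that A(P) is monotone and
   nonsingular, whence U - V <= e A(P)^-1 1, which is O(e) by (H1).  So U <= V,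
   and U = V by symmetry. *)

From Stdlib Require Import Reals Lra FunctionalExtensionality Classical ClassicalEpsilon.
From mathcomp Require Import all_boot ssralg matrix.
From mathcomp Require Import Rstruct.
Import GRing.Theory.

Set Implicit Arguments.
Unset Strict Implicit.

Local Open Scope R_scope.

Section RealSums.
Variable n : nat.
Implicit Types (P : pred 'I_n) (F G : 'I_n -> R).

Lemma sumR_le P F G : (forall j, P j -> F j <= G j) ->
  \big[Rplus/R0]_(j | P j) F j <= \big[Rplus/R0]_(j | P j) G j.
Proof. by move=> FG; apply: (big_ind2 Rle) => // *; lra. Qed.

Lemma sumR_add P F G : \big[Rplus/R0]_(j | P j) (F j + G j) =
  \big[Rplus/R0]_(j | P j) F j + \big[Rplus/R0]_(j | P j) G j.
Proof. exact: big_split. Qed.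

Lemma sumR_ge0 P F : (forall j, P j -> 0 <= F j) -> 0 <= \big[Rplus/R0]_(j | P j) F j.
Proof. by move=> F_ge0; apply: big_ind => // *; lra. Qed.

Lemma sumR_mull P F c :
  \big[Rplus/R0]_(j | P j) (c * F j) = c * \big[Rplus/R0]_(j | P j) F j.
Proof.
apply: (big_ind2 (fun a b => a = c * b)); first by rewrite Rmult_0_r.
  by move=> ? ? ? ? -> ->; rewrite Rmult_plus_distr_l.
by [].
Qed.

Lemma sumR_opp P F :
  \big[Rplus/R0]_(j | P j) (- F j) = - \big[Rplus/R0]_(j | P j) F j.
Proof.
apply: (big_ind2 (fun a b => a = - b)); first by rewrite Ropp_0.
  by move=> ? ? ? ? -> ->; ring.
by [].
Qed.

Lemma sumR_le0_eq0 P F : (forall j, P j -> 0 <= F j) ->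
  \big[Rplus/R0]_(j | P j) F j <= 0 -> forall j, P j -> F j = 0.
Proof.
move=> F_ge0 sum_le0 j Pj.
have sum_split : \big[Rplus/R0]_(i | P i) F i =
    F j + \big[Rplus/R0]_(i | P i && (i != j)) F i by rewrite (bigD1 j).
have : 0 <= \big[Rplus/R0]_(i | P i && (i != j)) F i.
  by apply: sumR_ge0 => i /andP [/F_ge0].
by have := F_ge0 j Pj; lra.
Qed.

Lemma argmaxR_exists (i0 : 'I_n) F : exists k, forall j, F j <= F k.
Proof.
suff [k Hk] : exists k, forall j, j \in enum 'I_n -> F j <= F k.
  by exists k => j; apply: Hk; rewrite mem_enum.
elim: (enum 'I_n) => [|x s [k Hk]]; first by exists i0.
have [xk|kx] := Rle_dec (F x) (F k).
- by exists k => j; rewrite in_cons => /orP [/eqP -> //|/Hk].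
- by exists x => j; rewrite in_cons => /orP [/eqP -> |/Hk]; lra.
Qed.

End RealSums.

Lemma fin_uniform_pos (T : finType) (Q : T -> R -> Prop) :
  (forall t e e', 0 < e' <= e -> Q t e -> Q t e') ->
  (forall t, exists2 e, 0 < e & Q t e) -> exists2 e, 0 < e & forall t, Q t e.
Proof.
move=> Qmono Qpos.
suff [e e_gt0 He] : exists2 e, 0 < e & forall t, t \in enum T -> Q t e.
  by exists e => // t; apply: He; rewrite mem_enum.
elim: (enum T) => [|x s [e e_gt0 He]]; first by exists 1; [lra|].
have [e' e'_gt0 He'] := Qpos x.
have emin_gt0 := Rmin_pos _ _ e_gt0 e'_gt0.
exists (Rmin e e') => // t; rewrite in_cons => /orP [/eqP ->|ts].
- by apply: (Qmono _ e'); [split; [|exact: Rmin_r]|].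
- by apply: (Qmono _ e); [split; [|exact: Rmin_l]|apply: He].
Qed.

Lemma le0_of_le_eps x c e0 : 0 < e0 ->
  (forall eps, 0 < eps <= e0 -> x <= eps * c) -> x <= 0.
Proof.
move=> e0_gt0 Hx.
have [c_le0|c_gt0] := Rle_lt_dec c 0.
  by have := Hx e0 (conj e0_gt0 (Rle_refl _)); nra.
apply: Rnot_lt_le => x_gt0.
pose eps := Rmin e0 (x / (2 * c)).
have eps_gt0 : 0 < eps by apply: Rmin_pos => //; apply: Rdiv_lt_0_compat; lra.
have : eps * (2 * c) <= x.
  have {1}-> : x = x / (2 * c) * (2 * c) by field; lra.
  by apply: Rmult_le_compat_r; [lra | exact: Rmin_r].
have := Hx eps (conj eps_gt0 (Rmin_l _ _)); nra.
Qed.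

Definition mulmxv n (A : rmat n) (z : rvec n) : rvec n :=
  fun i => rsum (fun j => A i j * z j).

Section InverseOfInjective.
Local Open Scope ring_scope.

Lemma inverse_of_injective n (A : rmat n) :
  (forall z : rvec n, (forall i, mulmxv A z i = 0) -> forall i, z i = 0) ->
  exists B, is_inverse A B.
Proof.
move=> Ainj.
pose Am : 'M[R]_n := \matrix_(i, j) A i j.
have detA : \det Am^T != 0.
  apply/negP => /det0P [v /negP v_neq0 vA]; apply: v_neq0.
  apply/eqP/matrixP => a b; rewrite (ord1 a) mxE.
  apply: (Ainj (v ord0)) => i.
  have := congr1 (fun N : 'M[R]_(1, n) => N ord0 i) vA; rewrite !mxE => <-.
  by apply: eq_bigr => j _; rewrite !mxE mulrC.
have Aunit : Am \in unitmx by rewrite unitmxE unitfE -det_tr.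
exists (fun i j => invmx Am i j); split;
  apply: functional_extensionality => i; apply: functional_extensionality => k;
  rewrite /mxmul /mxid; transitivity ((i == k)%:R : R); try by case: (i == k).
- have := congr1 (fun N : 'M[R]_n => N i k) (mulmxV Aunit); rewrite !mxE => <-.
  by apply: eq_bigr => j _; rewrite mxE.
- have := congr1 (fun N : 'M[R]_n => N i k) (mulVmx Aunit); rewrite !mxE => <-.
  by apply: eq_bigr => j _; rewrite mxE.
Qed.

End InverseOfInjective.

Section MulMxV.
Variables (n : nat) (A : rmat n).

Lemma mulmxvD (a b : rvec n) i :
  mulmxv A (fun j => a j + b j) i = mulmxv A a i + mulmxv A b i.
Proof. by rewrite /mulmxv /rsum -sumR_add; apply: eq_bigr => j _; ring. Qed.

Lemma mulmxvZ (b : rvec n) c i : mulmxv A (fun j => c * b j) i = c * mulmxv A b i.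
Proof. by rewrite /mulmxv /rsum -sumR_mull; apply: eq_bigr => j _; ring. Qed.

Lemma mulmxv_diag_off (z : rvec n) k :
  mulmxv A z k = A k k * z k + rsum_off k (fun j => A k j * z j).
Proof. by rewrite /mulmxv /rsum (bigD1 k). Qed.

Lemma mulmxv_inverse B (z : rvec n) :
  is_inverse A B -> forall k, mulmxv A (mulmxv B z) k = z k.
Proof.
move=> [AB _] k.
transitivity (rsum (fun l => mxid k l * z l)); last first.
  rewrite /rsum (bigD1 k) //= big1 /mxid ?eqxx; first ring.
  by move=> l lk; rewrite eq_sym (negbTE lk); ring.
rewrite -AB /mulmxv /mxmul /rsum.
under eq_bigr => j _ do rewrite -sumR_mull.
rewrite exchange_big /=; apply: eq_bigr => l _.
by rewrite Rmult_comm -sumR_mull; apply: eq_bigr => j _; ring.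
Qed.

End MulMxV.

Lemma rsum_off_opp n (k : 'I_n) (F : 'I_n -> R) :
  rsum_off k (fun j => - F j) = - rsum_off k F.
Proof. exact: sumR_opp. Qed.

Lemma Zmatrix_rsum_off_abs n (A : rmat n) k : Zmatrix A ->
  rsum_off k (fun j => Rabs (A k j)) = rsum_off k (fun j => - A k j).
Proof.
move=> AZ; apply: eq_bigr => j jk; apply/Rabs_left1/AZ.
by apply/eqP; rewrite eq_sym.
Qed.

Lemma nsdd_rsum_off n (A : rmat n) k : wdd A -> Zmatrix A -> 0 <= A k k ->
  ~ row_sdd A k -> rsum_off k (fun j => - A k j) = A k k.
Proof.
move=> Awdd AZ Akk; have := Awdd k.
rewrite /row_wdd /row_sdd Rabs_pos_eq // Zmatrix_rsum_off_abs //; lra.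
Qed.

(* A nonempty [nsdd_closed] set is a class of non-s.d.d. rows from which the
   graph of the off-diagonal entries never leads to an s.d.d. row: the
   obstruction to nonsingularity of a w.d.d. matrix. *)
Definition nsdd_closed n (A : rmat n) (K : {set 'I_n}) : Prop :=
  forall k, k \in K -> ~ row_sdd A k /\ forall j, j \notin K -> A k j = 0.

Definition nsdd_closed_free n (A : rmat n) : Prop :=
  forall K, nsdd_closed A K -> K = set0.

Section MaximumPrinciple.
Variables (n : nat) (A : rmat n).
Hypotheses (Awdd : wdd A) (AZ : Zmatrix A) (Adiag : forall i, 0 <= A i i).

(* The witness is the set of rows where z attains its positive maximum. *)
Lemma nsdd_closed_argmax (z : rvec n) i : (forall k, mulmxv A z k <= 0) -> 0 < z i ->
  exists2 K : {set 'I_n}, K != set0 & nsdd_closed A K.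
Proof.
move=> Az_le0 zi_gt0.
have [kmax zmax] := argmaxR_exists i z.
set m := z kmax in zmax.
exists [set k | z k == m].
  by apply/set0Pn; exists kmax; rewrite inE.
move=> k; rewrite inE => /eqP zk.
have off_eq : rsum_off k (fun j => A k j * z j) =
    rsum_off k (fun j => A k j * (z j - m)) + m * rsum_off k (A k).
  rewrite /rsum_off -sumR_mull -sumR_add; apply: eq_bigr => j _; ring.
have off_ge0 : forall j, j != k -> 0 <= A k j * (z j - m).
  move=> j jk; have := zmax j; have := @AZ k j ltac:(by apply/eqP; rewrite eq_sym).
  nra.
have dev_ge0 : 0 <= rsum_off k (fun j => A k j * (z j - m)) := sumR_ge0 off_ge0.
have off_abs : rsum_off k (fun j => Rabs (A k j)) = - rsum_off k (A k).
  by rewrite Zmatrix_rsum_off_abs // rsum_off_opp.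
have := Awdd k; rewrite /row_wdd Rabs_pos_eq // off_abs => kwdd.
have := Az_le0 k; rewrite mulmxv_diag_off off_eq zk => Azk.
have m_gt0 : 0 < m by have := zmax i; lra.
have knsdd : ~ row_sdd A k.
  by rewrite /row_sdd Rabs_pos_eq // off_abs; nra.
split=> // j; rewrite inE => jK.
have jk : j != k by apply: contraNneq jK => ->; rewrite zk.
have dev_le0 : rsum_off k (fun j => A k j * (z j - m)) <= 0 by nra.
have /(_ j jk) := sumR_le0_eq0 off_ge0 dev_le0.
case/Rmult_integral => // zj; move/eqP: jK; lra.
Qed.

Hypothesis Afree : nsdd_closed_free A.

Lemma nsdd_closed_free_monotone (z : rvec n) :
  (forall k, mulmxv A z k <= 0) -> forall i, z i <= 0.
Proof.
move=> Az_le0 i; apply: Rnot_lt_le => zi_gt0.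
have [K K_neq0 /Afree K0] := nsdd_closed_argmax Az_le0 zi_gt0.
by rewrite K0 eqxx in K_neq0.
Qed.

Lemma nsdd_closed_free_injective (z : rvec n) :
  (forall k, mulmxv A z k = 0) -> forall i, z i = 0.
Proof.
move=> Az0 i; apply: Rle_antisym.
  by apply: nsdd_closed_free_monotone => k; rewrite Az0; lra.
suff : -1 * z i <= 0 by lra.
apply: (nsdd_closed_free_monotone (z := fun j => -1 * z j)) => k.
by rewrite mulmxvZ Az0; lra.
Qed.

Lemma sub_le_of_residual B C eps (u v : rvec n) :
  is_inverse A B -> (forall i j, Rabs (B i j) <= C) -> 0 <= eps ->
  (forall k, mulmxv A u k - mulmxv A v k <= eps) ->
  forall i, u i - v i <= eps * rsum (fun _ : 'I_n => C).
Proof.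
move=> AB B_le eps_ge0 Auv i.
pose w := mulmxv B (fun _ => eps).
have Aw : forall k, mulmxv A w k = eps.
  by move=> k; rewrite mulmxv_inverse.
have : u i + -1 * (v i + w i) <= 0.
  apply: (nsdd_closed_free_monotone (z := fun j => u j + -1 * (v j + w j))) => k.
  by rewrite mulmxvD mulmxvZ mulmxvD Aw; have := Auv k; lra.
suff : w i <= eps * rsum (fun _ : 'I_n => C) by lra.
rewrite /w /mulmxv /rsum -sumR_mull; apply: sumR_le => l _.
have := B_le i l; have := Rle_abs (B i l); nra.
Qed.

End MaximumPrinciple.

Lemma ele_refl x : ele x x.
Proof. by case: x => //= r; lra. Qed.

Lemma ele_trans y x z : ele x y -> ele y z -> ele x z.
Proof. by case: x; case: y; case: z => //= *; lra. Qed.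

Lemma is_esup_exists (S : ER -> Prop) : exists s, is_esup S s.
Proof.
have [SP|SnP] := classic (S PInf).
  by exists PInf; split=> [[]|b /(_ _ SP)] //; case: b.
have [[r0 Sr0]|SnF] := classic (exists r, S (Fin r)); last first.
  by exists NInf; split=> // [[r Sr||]] //; apply: SnF; exists r.
have [bnd|nbnd] := classic (bound (fun r => S (Fin r))).
  have [l [l_ub l_least]] := completeness _ bnd (ex_intro _ r0 Sr0).
  exists (Fin l); split=> [[r Sr||]|[b|//|] Hb] //=; first exact: l_ub.
  - by apply: l_least => r Sr; exact: (Hb _ Sr).
  - by have := Hb _ Sr0.
exists PInf; split=> [[]|[b||] Hb] //; last by have := Hb _ Sr0.
by exfalso; apply: nbnd; exists b => r Sr; exact: (Hb _ Sr).
Qed.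

Lemma esupP (S : ER -> Prop) : is_esup S (esup S).
Proof. exact: epsilon_spec (is_esup_exists S). Qed.

Lemma esup_ub (S : ER -> Prop) x : S x -> ele x (esup S).
Proof. exact: (proj1 (esupP S)). Qed.

Lemma esup_least (S : ER -> Prop) b : (forall x, S x -> ele x b) -> ele (esup S) b.
Proof. exact: (proj2 (esupP S)). Qed.

Lemma escal_le c x r : 0 <= c -> ele x (Fin r) -> ele (escal c x) (Fin (c * r)).
Proof.
move=> c_ge0; case: x => [a|_|//] /=; first exact: Rmult_le_compat_l.
case: Rlt_dec => // ?; case: Rlt_dec => [|?] /=; first lra.
have c0 : c = 0 by lra.
by subst c; lra.
Qed.

Lemma escal0 x : escal 0 x = Fin 0.
Proof.
by case: x => [r||] /=; [rewrite Rmult_0_l | case: Rlt_dec => /= *; [lra|] ..].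
Qed.

Lemma eaddxNInf x : eadd x NInf = NInf.
Proof. by case: x. Qed.

Lemma eadd_le a b c d : ele a (Fin b) -> ele c (Fin d) -> ele (eadd a c) (Fin (b + d)).
Proof. by case: a => [a||] //; case: c => [c||] //= *; lra. Qed.

Definition efin n (U : rvec n) : 'I_n -> ER := fun j => Fin (U j).

Section BellmanIterates.
Variables (M : nat) (Pset : 'I_M.+1 -> Type).
Variables (A : policy Pset -> rmat M.+1) (y : policy Pset -> rvec M.+1).
Hypothesis HH3 : H3 A.

Lemma bellman_term_diag_off U P k : bellman_term A y U P k =
  - (A P k k * U k) + rsum_off k (fun j => - A P k j * U j) + y P k.
Proof.
have -> : rsum_off k (fun j => - A P k j * U j) = - rsum_off k (fun j => A P k j * U j).
  by rewrite -rsum_off_opp; apply: eq_bigr => j _; ring.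
by rewrite /bellman_term -[rsum _]/(mulmxv (A P) U k) mulmxv_diag_off; ring.
Qed.

Lemma Mterm_le_sol (X : 'I_M.+1 -> ER) U P k :
  (forall j, ele (X j) (Fin (U j))) -> bellman_term A y U P k <= 0 ->
  ele (Mterm A y X P k) (Fin (U k)).
Proof.
move=> XU bt_le0; rewrite /Mterm /yhat.
destruct Rlt_dec as [ksdd|knsdd]; first by rewrite eaddxNInf.
have [_ [AZ [_ Akk_le1]]] := HH3 P.
have diag_le := escal_le (c := 1 - A P k k) ltac:(have := Akk_le1 k knsdd; lra) (XU k).
have off_le : ele (\big[eadd/Fin R0]_(j | j != k) escal (- A P k j) (X j))
                  (Fin (rsum_off k (fun j => - A P k j * U j))).
  apply: (big_ind2 (fun e r => ele e (Fin r))) => /=; first lra.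
    by move=> *; apply: eadd_le.
  move=> j jk; apply: escal_le (XU j).
  by have := @AZ k j ltac:(by apply/eqP; rewrite eq_sym); lra.
apply: (ele_trans (eadd_le (eadd_le diag_le off_le) (ele_refl (Fin (y P k))))) => /=.
by move: bt_le0; rewrite bellman_term_diag_off; lra.
Qed.

(* On a closed set K of non-s.d.d. rows the term of M only sees entries in K,
   and its coefficients (1 - a_kk, -a_kj) are nonnegative with sum 1. *)
Lemma Mterm_ge_sub (X : 'I_M.+1 -> ER) U (K : {set 'I_M.+1}) P k c eps :
  nsdd_closed (A P) K -> k \in K ->
  (forall j, j \in K -> exists x, X j = Fin x /\ U j - c <= x) ->
  - eps <= bellman_term A y U P k ->
  exists x, Mterm A y X P k = Fin x /\ U k - c - eps <= x.
Proof.
move=> Kcl kK XK bt_ge.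
have [knsdd Kout] := Kcl k kK.
pose x j := if X j is Fin r then r else U j.
have Xx : forall j, j \in K -> X j = Fin (x j) /\ U j - c <= x j.
  by move=> j /XK [r [Xj ?]]; rewrite /x Xj.
have [Awdd [AZ [Adiag Akk_le1]]] := HH3 P.
have Akk_le1k := Akk_le1 k knsdd.
have off_eq : \big[eadd/Fin R0]_(j | j != k) escal (- A P k j) (X j)
                = Fin (rsum_off k (fun j => - A P k j * x j)).
  apply: (big_ind2 (fun e r => e = Fin r)) => //=; first by move=> ? ? ? ? -> ->.
  move=> j jk; have [/Xx [-> _] //|jK] := boolP (j \in K).
  by rewrite Kout // Ropp_0 escal0 Rmult_0_l.
have yhat_k : yhat A y P k = Fin (y P k).
  by rewrite /yhat; destruct Rlt_dec as [ksdd|]; first by case: knsdd.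
rewrite /Mterm yhat_k off_eq (proj1 (Xx k kK)) /=; eexists; split; first reflexivity.
have diag_ge : (1 - A P k k) * (U k - c) <= (1 - A P k k) * x k.
  by apply: Rmult_le_compat_l; [lra | exact: (proj2 (Xx k kK))].
have off_ge : rsum_off k (fun j => - A P k j * (U j - c)) <=
              rsum_off k (fun j => - A P k j * x j).
  apply: sumR_le => j jk; have [jK|jK] := boolP (j \in K).
    apply: Rmult_le_compat_l; last exact: (proj2 (Xx j jK)).
    by have := @AZ k j ltac:(by apply/eqP; rewrite eq_sym); lra.
  by rewrite Kout //; lra.
have off_split : rsum_off k (fun j => - A P k j * (U j - c)) =
    rsum_off k (fun j => - A P k j * U j) + (- c) * rsum_off k (fun j => - A P k j).
  by rewrite /rsum_off -sumR_mull -sumR_add; apply: eq_bigr => j _; ring.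
have := nsdd_rsum_off Awdd AZ (Adiag k) knsdd.
by move: bt_ge; rewrite bellman_term_diag_off; nra.
Qed.

Variable U : rvec M.+1.
Hypothesis HU : bellman_solution A y U.

Lemma Mpow_le_sol m k : ele (Mpow A y m (efin U) k) (Fin (U k)).
Proof.
elim: m k => [|m IH] k; first exact: ele_refl.
apply: esup_least => _ [P ->]; apply: Mterm_le_sol => //.
exact: (proj1 (HU k) _ (ex_intro _ P erefl)).
Qed.

Lemma Mpow_ge_sub (K : {set 'I_M.+1}) P eps :
  nsdd_closed (A P) K -> (forall k, k \in K -> - eps <= bellman_term A y U P k) ->
  forall m k, k \in K ->
  exists x, Mpow A y m (efin U) k = Fin x /\ U k - INR m * eps <= x.
Proof.
move=> Kcl bt_ge; elim=> [|m IH] k kK; first by exists (U k); split=> //=; lra.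
have [x0 [Mx0 x0_ge]] := Mterm_ge_sub Kcl kK IH (bt_ge k kK).
have := Mpow_le_sol m.+1 k.
have : ele (Fin x0) (Mpow A y m.+1 (efin U) k).
  by rewrite -Mx0; apply: esup_ub; exists P.
case: (Mpow A y m.+1 (efin U) k) => [x||] // x0_le x_le.
by exists x; split=> //; move: x0_ge x0_le; rewrite S_INR /=; lra.
Qed.

Lemma Mpow_fixed_on_closed (K : {set 'I_M.+1}) i :
  (forall eps, 0 < eps -> exists P, nsdd_closed (A P) K /\
     forall k, k \in K -> - eps <= bellman_term A y U P k) ->
  i \in K -> forall m, Mpow A y m (efin U) i = Fin (U i).
Proof.
move=> Hclosed iK m.
have Mpow_ge eps : 0 < eps ->
    exists x, Mpow A y m (efin U) i = Fin x /\ U i - INR m * eps <= x.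
  by move=> /Hclosed [P [Kcl bt_ge]]; exact: Mpow_ge_sub Kcl bt_ge m i iK.
have [x [Mx _]] := Mpow_ge 1 Rlt_0_1.
have := Mpow_le_sol m i; rewrite Mx /= => x_le; congr Fin.
apply: Rle_antisym => //; suff : U i - x <= 0 by lra.
apply: (le0_of_le_eps (c := INR m) Rlt_0_1) => eps [eps_gt0 _].
have [x' [Mx' x'_ge]] := Mpow_ge eps eps_gt0.
by move: Mx'; rewrite Mx => [[x_eq]]; move: x'_ge; rewrite -x_eq; lra.
Qed.

Hypothesis HH4 : H4 A y.

Lemma closed_residual_gap (K : {set 'I_M.+1}) : K != set0 ->
  exists2 e, 0 < e & forall P, nsdd_closed (A P) K ->
    exists2 k, k \in K & bellman_term A y U P k < - e.
Proof.
case/set0Pn=> i iK; apply: NNPP => no_gap.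
suff fixed : forall m, Mpow A y m (efin U) i = Fin (U i).
  have [m1 [m2 [_]]] := HH4 U i.
  by rewrite -!/(efin U) !fixed => -[_ []].
apply: Mpow_fixed_on_closed iK => eps eps_gt0.
apply: NNPP => no_P; apply: no_gap; exists eps => // P Kcl.
apply: NNPP => no_k; apply: no_P; exists P; split=> // k kK.
by apply: Rnot_lt_le => bt_lt; apply: no_k; exists k.
Qed.

Lemma uniform_residual_gap : exists2 e, 0 < e & forall K, K != set0 ->
  forall P, nsdd_closed (A P) K -> exists2 k, k \in K & bellman_term A y U P k < - e.
Proof.
apply: fin_uniform_pos => [K e e' [_ e'_le] gap /gap {}gap P /gap [k kK bt_lt]|K].
  by exists k => //; lra.
have [/closed_residual_gap [e e_gt0 gap]|/negPn/eqP ->] := boolP (K != set0).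
  by exists e.
by exists 1; [lra|].
Qed.

End BellmanIterates.

Lemma almost_optimal_policy M (Pset : 'I_M.+1 -> Type)
    (A : policy Pset -> rmat M.+1) (y : policy Pset -> rvec M.+1) U eps :
  row_decoupled A y -> bellman_solution A y U -> 0 < eps ->
  exists P, forall k, - eps <= bellman_term A y U P k.
Proof.
move=> Hdec HU eps_gt0.
have row_opt k : exists P, - eps <= bellman_term A y U P k.
  apply: NNPP => no_P.
  suff : 0 <= - eps by lra.
  apply: (proj2 (HU k)) => _ [P ->]; apply: Rnot_lt_le => bt_gt.
  by apply: no_P; exists P; lra.
have [f Hf] := fin_all_exists row_opt.
pose P k := f k k; exists P => k.
have [Arow yrow] := Hdec P (f k) k erefl.
have := Hf k; rewrite /bellman_term yrow.
suff -> : rsum (fun j => A P k j * U j) = rsum (fun j => A (f k) k j * U j) by [].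
by apply: eq_bigr => j _; rewrite Arow.
Qed.

Lemma bellman_solution_le M (Pset : 'I_M.+1 -> Type)
    (A : policy Pset -> rmat M.+1) (y : policy Pset -> rvec M.+1) U V :
  row_decoupled A y -> H1 A -> H3 A -> H4 A y ->
  bellman_solution A y U -> bellman_solution A y V -> forall i, U i <= V i.
Proof.
move=> Hdec [C HC] HH3 HH4 HU HV i.
have [e0 e0_gt0 gap] := uniform_residual_gap HH3 HU HH4.
suff : U i - V i <= 0 by lra.
apply: (le0_of_le_eps (c := rsum (fun _ => C)) e0_gt0) => eps [eps_gt0 eps_le].
have [P HP] := almost_optimal_policy Hdec HU eps_gt0.
have [Awdd [AZ [Adiag _]]] := HH3 P.
have Pfree : nsdd_closed_free (A P).
  move=> K Kcl; apply/eqP/negPn/negP => K_neq0.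
  have [k _] := gap K K_neq0 P Kcl.
  by have := HP k; lra.
have [B AB] := inverse_of_injective (nsdd_closed_free_injective Awdd AZ Adiag Pfree).
apply: (sub_le_of_residual Awdd AZ Adiag Pfree AB (HC P B AB)); first lra.
move=> k; have := HP k; have := proj1 (HV k) _ (ex_intro _ P erefl).
rewrite /bellman_term /mulmxv; lra.
Qed.

Theorem theorem3p8 (M : nat) (Pset : 'I_M.+1 -> Type)
  (Pne : forall i, inhabited (Pset i))
  (A : policy Pset -> rmat M.+1) (y : policy Pset -> rvec M.+1)
  (Hdec : row_decoupled A y)
  (HH1 : H1 A) (HH3 : H3 A) (HH4 : H4 A y) :
  forall U V : rvec M.+1,
    bellman_solution A y U -> bellman_solution A y V -> forall i, U i = V i.
Proof.
move=> U V HU HV i.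
have sol_le := bellman_solution_le Hdec HH1 HH3 HH4.
by apply: Rle_antisym; [exact: sol_le HU HV i | exact: sol_le HV HU i].
Qed.
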